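(* Let $\mathcal{W}\subseteq\{x\in\mathbb{R}^d:\|x\|_2\le 1\}$ be closed and convex with $0\in\mathcal{W}$, let $L>0$, and let $f_1,\dots,f_T$ be convex differentiable functions whose gradients are $L$-Lipschitz on $\mathcal{W}$: $\|\nabla f_t(x)-\nabla f_t(x')\|_2\le L\|x-x'\|_2$. Set $f_0\equiv 0$ and $z_0=0$, fix $\eta\in(0,1]$, and for $t=1,\dots,T$ define $$x_t=\arg\min_{x\in\mathcal{W}}\Bigl\{\langle x,\nabla f_{t-1}(z_{t-1})\rangle+\tfrac{L}{2\eta}\|x-z_{t-1}\|_2^2\Bigr\},\qquad z_t=\arg\min_{x\in\mathcal{W}}\Bigl\{\Bigl\langle x,\sum_{\tau=1}^t\nabla f_\tau(z_{\tau-1})\Bigr\rangle+\tfrac{L}{2\eta}\|x\|_2^2\Bigr\}.$$ Then $$\sum_{t=1}^T f_t(x_t)\le\min_{x\in\mathcal{W}}\Bigl[\tfrac{L}{2\eta}\|x\|_2^2+\sum_{t=1}^T\bigl(f_t(z_{t-1})+\langle x-z_{t-1},\nabla f_t(z_{t-1})\rangle\bigr)\Bigr]+\frac{\eta}{2L}\sum_{t=0}^{T-1}\|\nabla f_{t+1}(z_t)-\nabla f_t(z_t)\|_2^2.$$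
   Context: The iterates $x_t$ (decisions) and $z_t$ (search points) constitute the ''improved follow-the-regularized-leader'' (IFTRL) algorithm for online convex optimization: $x_t$ is played before $f_t$ is revealed, then $z_t$ is computed. *)

From Stdlib Require Import Reals.
From mathcomp Require Import all_boot.
Set Implicit Arguments. Unset Strict Implicit.

Local Open Scope R_scope.

Definition vec (d : nat) := 'I_d -> R.

Definition vzero (d : nat) : vec d := fun _ => 0.
Arguments vzero d _ : clear implicits.
Definition vadd d (x y : vec d) : vec d := fun i => x i + y i.
Definition vsub d (x y : vec d) : vec d := fun i => x i - y i.
Definition vscale d (a : R) (x : vec d) : vec d := fun i => a * x i.

Definition dot d (x y : vec d) : R := \big[Rplus/0]_(i < d) (x i * y i).
Definition normsq d (x : vec d) : R := dot x x.
Definition norm2 d (x : vec d) : R := sqrt (normsq x).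

Definition vclosed_set d (W : vec d -> Prop) : Prop :=
  forall x, (forall eps, 0 < eps -> exists w, W w /\ norm2 (vsub x w) < eps) -> W x.

Definition vconvex_set d (W : vec d -> Prop) : Prop :=
  forall x y (l : R), W x -> W y -> 0 <= l <= 1 ->
    W (vadd (vscale l x) (vscale (1 - l) y)).

Definition convex_fun d (f : vec d -> R) : Prop :=
  forall x y (l : R), 0 <= l <= 1 ->
    f (vadd (vscale l x) (vscale (1 - l) y)) <= l * f x + (1 - l) * f y.

Definition has_gradient_at d (f : vec d -> R) (x g : vec d) : Prop :=
  forall eps, 0 < eps -> exists delta, 0 < delta /\
    forall h, norm2 h < delta ->
      Rabs (f (vadd x h) - f x - dot g h) <= eps * norm2 h.

Definition is_gradient d (f : vec d -> R) (gradf : vec d -> vec d) : Prop :=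
  forall x, has_gradient_at f x (gradf x).

Definition is_argmin d (W : vec d -> Prop) (phi : vec d -> R) (x : vec d) : Prop :=
  W x /\ forall y, W y -> phi x <= phi y.

Definition rsum (m n : nat) (F : nat -> R) : R := \big[Rplus/0]_(m <= t < n) F t.

(* Each round is controlled by four inequalities: the descent lemma bounds
   f_t(x_t) by its linearization at z_{t-1} plus (L/2)|x_t - z_{t-1}|^2; the
   three-point property of the proximal step defining x_t and the strong
   convexity of the FTRL objective minimized by z_{t-1} trade the quadratic
   terms against |z_t - x_t|^2; Young's inequality absorbs the remaining
   cross term <x_t - z_t, g_t - g_{t-1}>, leaving (eta/2L)|g_t - g_{t-1}|^2.
   What is left over is the increment of the potential
   Phi_t(z_t) - <w, G_t>, with Phi_t the FTRL objective and G_t the cumulative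
   gradient, so the bound telescopes; at t = T the potential is at most
   (L/2eta)|w|^2 because z_T minimizes Phi_T over W. *)

From Stdlib Require Import Reals Lra FunctionalExtensionality.
From HB Require Import structures.
From mathcomp Require Import all_boot.
Set Implicit Arguments. Unset Strict Implicit.
Local Open Scope R_scope.

HB.instance Definition _ := Monoid.isComLaw.Build R 0 Rplus
  (fun a b c => esym (Rplus_assoc a b c)) Rplus_comm Rplus_0_l.

Section RealSums.
Variables (I : Type) (r : seq I) (P : pred I).
Implicit Types F G : I -> R.

Lemma big_Rminus F G :
  \big[Rplus/0]_(i <- r | P i) (F i - G i)
  = \big[Rplus/0]_(i <- r | P i) F i - \big[Rplus/0]_(i <- r | P i) G i.
Proof. by apply: (big_rec3 (fun a b c => a = b - c)) => [|i a b c _ ->]; lra. Qed.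

Lemma big_Rmult_l (c : R) F :
  \big[Rplus/0]_(i <- r | P i) (c * F i) = c * \big[Rplus/0]_(i <- r | P i) F i.
Proof. by apply: (big_rec2 (fun a b => a = c * b)) => [|i a b _ ->]; ring. Qed.

Lemma big_Rle F G : (forall i, P i -> F i <= G i) ->
  \big[Rplus/0]_(i <- r | P i) F i <= \big[Rplus/0]_(i <- r | P i) G i.
Proof.
move=> FG; apply: (big_rec2 (fun a b => a <= b)) => [|i a b Pi ab]; first lra.
by have := FG i Pi; lra.
Qed.

End RealSums.

Ltac vec_ring := rewrite /dot /normsq;
  do ?[rewrite -big_Rmult_l | rewrite -big_split | rewrite -big_Rminus];
  apply: eq_bigr => i _ /=; rewrite /vadd /vscale /vsub /vzero; ring.

Lemma normsq_ge0 d (x : vec d) : 0 <= normsq x.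
Proof.
apply: (big_rec (fun a => 0 <= a)) => [|i a _ a_ge0]; first lra.
by have := Rle_0_sqr (x i); rewrite /Rsqr; lra.
Qed.

Lemma normsq0 d : normsq (vzero d) = 0.
Proof. by apply: (big_rec (fun a => a = 0)) => // i a _ ->; rewrite /vzero; ring. Qed.

Lemma normsq_sub0 d (x : vec d) : normsq (vsub x (vzero d)) = normsq x.
Proof. by vec_ring. Qed.

Lemma normsq_subC d (x y : vec d) : normsq (vsub x y) = normsq (vsub y x).
Proof. by vec_ring. Qed.

Lemma norm2_scale d (s : R) (h : vec d) : norm2 (vscale s h) = Rabs s * norm2 h.
Proof.
rewrite /norm2; have -> : normsq (vscale s h) = Rsqr s * normsq h by rewrite /Rsqr; vec_ring.
by rewrite sqrt_mult ?sqrt_Rsqr_abs //; [apply: Rle_0_sqr | apply: normsq_ge0].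
Qed.

Lemma dot_le_young d (a b : vec d) (mu : R) : 0 < mu ->
  dot a b <= mu / 2 * normsq a + 1 / (2 * mu) * normsq b.
Proof.
move=> mu_gt0; rewrite /normsq /dot -!big_Rmult_l -big_split; apply: big_Rle => i _ /=.
have sq_ge0 : 0 <= (mu * a i - b i) * (mu * a i - b i) / (2 * mu).
  by apply: Rle_mult_inv_pos; [apply: Rle_0_sqr | lra].
have -> : mu / 2 * (a i * a i) + 1 / (2 * mu) * (b i * b i)
        = a i * b i + (mu * a i - b i) * (mu * a i - b i) / (2 * mu) by field; lra.
lra.
Qed.

(* Young's inequality with weight M, followed by the norm bound squared. *)
Lemma dot_le_normsq_of_norm2_le d (a b : vec d) (M : R) : 0 < M ->
  norm2 a <= M * norm2 b -> dot b a <= M * normsq b.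
Proof.
move=> M_gt0 ab.
have na := sqrt_sqrt _ (normsq_ge0 a); have nb := sqrt_sqrt _ (normsq_ge0 b).
have a_ge0 : 0 <= norm2 a by apply: sqrt_pos.
have sq : normsq a <= M * M * normsq b.
  rewrite -na -nb; rewrite /norm2 in ab a_ge0.
  have := Rmult_le_compat _ _ _ _ a_ge0 a_ge0 ab ab; lra.
have : 1 / (2 * M) * normsq a <= M / 2 * normsq b.
  have -> : M / 2 * normsq b = 1 / (2 * M) * (M * M * normsq b) by field; lra.
  by apply: Rmult_le_compat_l => //; apply: Rlt_le; apply: Rdiv_lt_0_compat; lra.
have := dot_le_young b a M_gt0; lra.
Qed.

Lemma ge0_of_perturbation_ge0 (A B : R) : 0 <= B ->
  (forall l, 0 < l <= 1 -> 0 <= l * A + l * l * B) -> 0 <= A.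
Proof.
move=> B_ge0 perturb; case: (Rle_lt_dec 0 A) => // A_lt0.
(* With this l, l * A + l * l * B = l * A * (B - A) / (2 * B - A) < 0. *)
pose l := - A / (2 * B - A).
have l_def : l * (2 * B - A) = - A by rewrite /l; field; lra.
have l_gt0 : 0 < l by apply: Rdiv_lt_0_compat; lra.
have := perturb l; nra.
Qed.

Lemma prox_three_point d (W : vec d -> Prop) (c p m y : vec d) (k : R) :
  vconvex_set W -> 0 < k ->
  is_argmin W (fun w => dot w c + k * normsq (vsub w p)) m -> W y ->
  dot m c + k * normsq (vsub m p) + k * normsq (vsub y m)
  <= dot y c + k * normsq (vsub y p).
Proof.
move=> W_convex k_gt0 [Wm m_min] Wy.
pose A := dot (vsub y m) c + 2 * k * dot (vsub m p) (vsub y m).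
pose B := k * normsq (vsub y m).
have B_ge0 : 0 <= B by apply: Rmult_le_pos; [lra | apply: normsq_ge0].
have segment l : dot (vadd (vscale l y) (vscale (1 - l) m)) c
    + k * normsq (vsub (vadd (vscale l y) (vscale (1 - l) m)) p)
    - (dot m c + k * normsq (vsub m p)) = l * A + l * l * B.
  by rewrite /A /B; vec_ring.
have endpoint : dot y c + k * normsq (vsub y p) - (dot m c + k * normsq (vsub m p)) = A + B.
  by rewrite /A /B; vec_ring.
have A_ge0 : 0 <= A.
  apply: (ge0_of_perturbation_ge0 B_ge0) => l l01.
  have := m_min _ (W_convex y m l Wy Wm (conj (Rlt_le _ _ (proj1 l01)) (proj2 l01))).
  by have := segment l; lra.
by rewrite /B in B_ge0 endpoint; lra.
Qed.

Lemma derivable_pt_lim_line d (f : vec d -> R) (gf : vec d -> vec d) (u h : vec d) (s : R) :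
  is_gradient f gf ->
  derivable_pt_lim (fun s => f (vadd u (vscale s h))) s (dot (gf (vadd u (vscale s h))) h).
Proof.
move=> f_grad eps eps_gt0.
set p := vadd u (vscale s h); set n := norm2 h.
have n_ge0 : 0 <= n by apply: sqrt_pos.
pose eps' := eps / (2 * (n + 1)).
have eps'_gt0 : 0 < eps' by apply: Rdiv_lt_0_compat; lra.
have [delta [delta_gt0 f_approx]] := f_grad p eps' eps'_gt0.
have delta'_gt0 : 0 < delta / (n + 1) by apply: Rdiv_lt_0_compat; lra.
exists (mkposreal _ delta'_gt0) => /= del del_neq0 del_small.
have absdel_gt0 : 0 < Rabs del by apply: Rabs_pos_lt.
have shift : vadd u (vscale (s + del) h) = vadd p (vscale del h).
  by apply: functional_extensionality => i; rewrite /p /vadd /vscale; ring.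
have step_small : norm2 (vscale del h) < delta.
  rewrite norm2_scale -/n.
  have : Rabs del * (n + 1) < delta.
    have := Rmult_lt_compat_r (n + 1) _ _ ltac:(lra) del_small.
    by rewrite /Rdiv Rmult_assoc Rinv_l; lra.
  have : Rabs del * n <= Rabs del * (n + 1) by apply: Rmult_le_compat_l; lra.
  lra.
have := f_approx _ step_small.
rewrite -shift norm2_scale -/n.
have -> : dot (gf p) (vscale del h) = del * dot (gf p) h by vec_ring.
have -> : (f (vadd u (vscale (s + del) h)) - f p) / del - dot (gf p) h
   = (f (vadd u (vscale (s + del) h)) - f p - del * dot (gf p) h) * / del by field.
rewrite Rabs_mult Rabs_inv; set N := Rabs _ => N_le.
have : N * / Rabs del <= eps' * n.
  by apply: (Rmult_le_reg_r (Rabs del)) => //; rewrite Rmult_assoc Rinv_l; lra.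
have : eps' * n < eps.
  have : eps' * n <= eps' * (n + 1) by apply: Rmult_le_compat_l; lra.
  have -> : eps' * (n + 1) = eps / 2 by rewrite /eps'; field; lra.
  lra.
lra.
Qed.

(* Descent lemma, by the mean value theorem applied to
   s |-> f (u + s h) - s <h, gf u> - (L/2) s^2 |h|^2 on [0, 1]. *)
Lemma smooth_descent d (W : vec d -> Prop) (f : vec d -> R) (gf : vec d -> vec d)
    (L : R) (u v : vec d) :
  vconvex_set W -> 0 < L -> is_gradient f gf ->
  (forall a b, W a -> W b -> norm2 (vsub (gf a) (gf b)) <= L * norm2 (vsub a b)) ->
  W u -> W v ->
  f v <= f u + dot (vsub v u) (gf u) + L / 2 * normsq (vsub v u).
Proof.
move=> W_convex L_gt0 f_grad gf_lip Wu Wv.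
set h := vsub v u; set a := dot h (gf u); set b := normsq h.
pose p s := vadd u (vscale s h).
pose phi s := f (p s) - (s * a + L / 2 * (s * s) * b).
pose phi' s := dot (gf (p s)) h - (a + L * s * b).
have phi_deriv c : 0 <= c <= 1 -> derivable_pt_lim phi c (phi' c).
  move=> _; have := derivable_pt_lim_minus _ _ c _ _ (derivable_pt_lim_line u h c f_grad)
    (derivable_pt_lim_plus _ _ c _ _
       (derivable_pt_lim_scal id a c _ (derivable_pt_lim_id c))
       (derivable_pt_lim_scal Rsqr (L / 2 * b) c _ (derivable_pt_lim_Rsqr c))).
  have -> : dot (gf (vadd u (vscale c h))) h - (a * 1 + L / 2 * b * (2 * c)) = phi' c.
    by rewrite /phi' /p; field.
  apply: derivable_pt_lim_ext => s.
  by rewrite /minus_fct /plus_fct /mult_real_fct /id /Rsqr /phi /p; field.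
have [c [phi_mvt [c_gt0 c_lt1]]] := MVT_cor2 phi phi' 0 1 Rlt_0_1 phi_deriv.
have pc_as_comb : p c = vadd (vscale c v) (vscale (1 - c) u).
  by apply: functional_extensionality => i; rewrite /p /vadd /vscale /h /vsub; ring.
have W_pc : W (p c) by rewrite pc_as_comb; apply: W_convex => //; lra.
have grad_lip : norm2 (vsub (gf (p c)) (gf u)) <= L * c * norm2 h.
  apply: Rle_trans (gf_lip _ _ W_pc Wu) _.
  have -> : vsub (p c) u = vscale c h.
    by apply: functional_extensionality => i; rewrite /p /vadd /vscale /vsub; ring.
  rewrite norm2_scale Rabs_pos_eq; lra.
have : dot h (vsub (gf (p c)) (gf u)) <= L * c * b.
  by apply: dot_le_normsq_of_norm2_le => //; apply: Rmult_lt_0_compat.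
have -> : dot h (vsub (gf (p c)) (gf u)) = dot (gf (p c)) h - a by rewrite /a; vec_ring.
have p1 : p 1 = v by apply: functional_extensionality => i; rewrite /p /vadd /vscale /h /vsub; ring.
have p0 : p 0 = u by apply: functional_extensionality => i; rewrite /p /vadd /vscale /h /vsub; ring.
move: phi_mvt; rewrite /phi /phi' p1 p0; lra.
Qed.

Lemma rsum_telescope_le (a b c u : nat -> R) (n : nat) :
  (forall t, (t < n)%nat -> a t <= b t + c t + (u t.+1 - u t)) ->
  rsum 0 n a <= rsum 0 n b + rsum 0 n c + (u n - u 0%nat).
Proof.
elim: n => [|n IH] step; first by rewrite /rsum !big_geq //; lra.
have := IH (fun t lt_tn => step t (leqW lt_tn)); have := step n (ltnSn n).
by rewrite /rsum !big_nat_recr //=; lra.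
Qed.

Section IFTRL.

Variables (d : nat) (W : vec d -> Prop) (L eta : R) (T : nat).
Variables (f : nat -> vec d -> R) (gradf : nat -> vec d -> vec d) (x z : nat -> vec d).

Local Notation k := (L / (2 * eta)).

Definition cumgrad t : vec d :=
  fun i => rsum 1 t.+1 (fun tau => gradf tau (z (tau - 1)%nat) i).

Definition ftrl_obj t (y : vec d) : R := dot y (cumgrad t) + k * normsq y.

Definition potential (w : vec d) t : R := ftrl_obj t (z t) - dot w (cumgrad t).

Hypotheses (W_convex : vconvex_set W) (L_gt0 : 0 < L) (eta_gt0 : 0 < eta) (eta_le1 : eta <= 1).
Hypothesis f_grad : forall t, (t <= T)%nat -> is_gradient (f t) (gradf t).
Hypothesis gradf_lip : forall t, (1 <= t <= T)%nat -> forall u v, W u -> W v ->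
  norm2 (vsub (gradf t u) (gradf t v)) <= L * norm2 (vsub u v).
Hypotheses (W0 : W (vzero d)) (z0 : z 0%nat = vzero d).
Hypothesis x_prox : forall t, (1 <= t <= T)%nat ->
  is_argmin W (fun w => dot w (gradf (t - 1)%nat (z (t - 1)%nat))
                        + k * normsq (vsub w (z (t - 1)%nat))) (x t).
Hypothesis z_ftrl : forall t, (1 <= t <= T)%nat -> is_argmin W (ftrl_obj t) (z t).

Lemma k_gt0 : 0 < k.
Proof. by apply: Rdiv_lt_0_compat; lra. Qed.

Lemma dot_cumgrad0 y : dot y (cumgrad 0) = 0.
Proof.
apply: (big_rec (fun a => a = 0)) => // i a _ ->.
by rewrite /cumgrad /rsum big_geq //; ring.
Qed.

Lemma dot_cumgradS y n :
  dot y (cumgrad n.+1) = dot y (cumgrad n) + dot y (gradf n.+1 (z n)).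
Proof.
rewrite /dot -big_split; apply: eq_bigr => i _ /=.
by rewrite /cumgrad /rsum big_nat_recr //= subn1 /=; ring.
Qed.

Lemma z_in_W s : (s <= T)%nat -> W (z s).
Proof. by case: s => [|s] le_sT; [rewrite z0 | case: (@z_ftrl s.+1 le_sT)]. Qed.

Lemma ftrl_obj_strong s : (s <= T)%nat -> forall y, W y ->
  ftrl_obj s (z s) + k * normsq (vsub y (z s)) <= ftrl_obj s y.
Proof.
case: s => [|s] le_sT y Wy; rewrite /ftrl_obj.
  by rewrite !dot_cumgrad0 z0 normsq0 normsq_sub0; lra.
have z_min :
    is_argmin W (fun w => dot w (cumgrad s.+1) + k * normsq (vsub w (vzero d))) (z s.+1).
  rewrite (_ : (fun w => _) = ftrl_obj s.+1); first exact: z_ftrl.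
  by apply: functional_extensionality => w; rewrite normsq_sub0.
by have := prox_three_point W_convex k_gt0 z_min Wy; rewrite !normsq_sub0.
Qed.

Lemma potential0 w : potential w 0 = 0.
Proof. by rewrite /potential /ftrl_obj !dot_cumgrad0 z0 normsq0; ring. Qed.

Lemma potential_le w : W w -> potential w T <= k * normsq w.
Proof.
move=> Ww; have := ftrl_obj_strong (leqnn T) Ww.
have : 0 <= k * normsq (vsub w (z T)).
  by apply: Rmult_le_pos; [apply: Rlt_le; apply: k_gt0 | apply: normsq_ge0].
by rewrite /potential /ftrl_obj; lra.
Qed.

Lemma iftrl_step w n : (n < T)%nat ->
  f n.+1 (x n.+1)
  <= f n.+1 (z n) + dot (vsub w (z n)) (gradf n.+1 (z n))
     + eta / (2 * L) * normsq (vsub (gradf n.+1 (z n)) (gradf n (z n)))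
     + (potential w n.+1 - potential w n).
Proof.
move=> lt_nT.
have x_min : is_argmin W (fun v => dot v (gradf n (z n)) + k * normsq (vsub v (z n))) (x n.+1).
  by have := @x_prox n.+1 lt_nT; rewrite subSS subn0.
have W_zn := z_in_W (ltnW lt_nT); have W_zn1 := z_in_W lt_nT.
set g := gradf n.+1 (z n); set g' := gradf n (z n).
have descent :=
  smooth_descent W_convex L_gt0 (f_grad lt_nT) (@gradf_lip n.+1 lt_nT) W_zn (proj1 x_min).
have three_point := prox_three_point W_convex k_gt0 x_min W_zn1.
have strong := ftrl_obj_strong (ltnW lt_nT) W_zn1.
have young := dot_le_young (vsub (x n.+1) (z n.+1)) (vsub g g')
  (Rmult_lt_0_compat _ _ Rlt_0_2 k_gt0).
have young_coef : 1 / (2 * (2 * k)) = eta / (2 * L) by field; lra.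
have half_2k : 2 * k / 2 = k by field; lra.
rewrite young_coef half_2k in young.
have quad : L / 2 * normsq (vsub (x n.+1) (z n)) <= k * normsq (vsub (x n.+1) (z n)).
  apply: Rmult_le_compat_r; first exact: normsq_ge0.
  by rewrite /Rdiv; apply: Rmult_le_compat_l; [lra | apply: Rinv_le_contravar; lra].
have regroup : dot (vsub (x n.+1) (z n)) g - dot (vsub w (z n)) g
  = dot (vsub (x n.+1) (z n.+1)) (vsub g g') + dot (x n.+1) g' - dot (z n.+1) g'
    + dot (z n.+1) g - dot w g by vec_ring.
rewrite (normsq_subC (z n.+1)) -/g' in three_point; rewrite -/g in descent.
by rewrite /ftrl_obj in strong; rewrite /potential /ftrl_obj !dot_cumgradS -/g; lra.
Qed.

End IFTRL.

Theorem mainTheorem2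
  (d : nat) (W : vec d -> Prop) (L eta : R) (T : nat)
  (f : nat -> vec d -> R) (gradf : nat -> vec d -> vec d)
  (x z : nat -> vec d)
  (HWclosed : vclosed_set W) (HWconvex : vconvex_set W)
  (HWball : forall w, W w -> norm2 w <= 1)
  (HW0 : W (vzero d))
  (HL : 0 < L)
  (Heta : 0 < eta <= 1)
  (Hf0 : forall v, f 0%nat v = 0)
  (Hconv : forall t, (1 <= t <= T)%nat -> convex_fun (f t))
  (Hgrad : forall t, (t <= T)%nat -> is_gradient (f t) (gradf t))
  (Hlip : forall t, (1 <= t <= T)%nat -> forall u v, W u -> W v ->
     norm2 (vsub (gradf t u) (gradf t v)) <= L * norm2 (vsub u v))
  (Hz0 : z 0%nat = vzero d)
  (Hx : forall t, (1 <= t <= T)%nat ->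
     is_argmin W (fun w => dot w (gradf (t - 1)%nat (z (t - 1)%nat))
                           + L / (2 * eta) * normsq (vsub w (z (t - 1)%nat))) (x t))
  (Hz : forall t, (1 <= t <= T)%nat ->
     is_argmin W (fun w => dot w (fun i => rsum 1 t.+1 (fun tau => gradf tau (z (tau - 1)%nat) i))
                           + L / (2 * eta) * normsq w) (z t)) :
  forall w, W w ->
    rsum 1 T.+1 (fun t => f t (x t))
    <= L / (2 * eta) * normsq w
       + rsum 1 T.+1 (fun t => f t (z (t - 1)%nat)
                              + dot (vsub w (z (t - 1)%nat)) (gradf t (z (t - 1)%nat)))
       + eta / (2 * L) * rsum 0 T (fun t => normsq (vsub (gradf t.+1 (z t)) (gradf t (z t)))).
Proof.
move=> w Ww; case: Heta => eta_gt0 eta_le1.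
have step := iftrl_step HWconvex HL eta_gt0 eta_le1 Hgrad Hlip HW0 Hz0 Hx Hz w.
have := rsum_telescope_le step; rewrite potential0 // /rsum big_Rmult_l => telescoped.
have := potential_le HWconvex HL eta_gt0 Hz0 Hz Ww.
rewrite /rsum big_add1 [X in _ <= _ + X + _]big_add1 /=.
under [X in _ <= _ + X + _]eq_bigr => t _ do rewrite subSS subn0.
lra.
Qed.
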